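(* Let $\mathcal{M},\mathcal{M}',\mathcal{M}''$ be periodic merge trees. Then: (positivity) $d_I(\mathcal{M},\mathcal{M}')\ge0$, and $d_I(\mathcal{M},\mathcal{M}')>0$ if and only if $\mathcal{M}\ne\mathcal{M}'$; (symmetry) $d_I(\mathcal{M},\mathcal{M}')=d_I(\mathcal{M}',\mathcal{M})$; (triangle inequality) $d_I(\mathcal{M},\mathcal{M}')+d_I(\mathcal{M}',\mathcal{M}'')\ge d_I(\mathcal{M},\mathcal{M}'')$.
   Context: Each periodic merge tree here is $\mathcal{M}(F,\Lambda)$ for some $d$-dimensional lattice $\Lambda\subseteq\mathbb{R}^d$ and some $\Lambda$-periodic filter $F$ on a $\Lambda$-periodic locally finite cell complex $K$ ($\sigma+u\in K$ and $F(\sigma+u)=F(\sigma)$ for $u\in\Lambda$, $F(\sigma)\le F(\tau)$ for faces $\sigma$ of $\tau$). It is the merge tree of the quotient filter $F/\Lambda$ on the finite quotient complex $K/\Lambda$ on the torus $\mathbb{R}^d/\Lambda$: the quotient of $\{(x,s): x\in(K/\Lambda)_s\}$ ($(K/\Lambda)_s$ the sublevel set at $s$) by $(x,s)\sim(y,t)$ iff $s=t$ and $x,y$ lie in the same component of $(K/\Lambda)_s$, with quotient topology and height $h$ (the $s$-coordinate); points are identified with components of sublevel sets; $B$ covers $A$ if $h(A)\le h(B)$ and $A\subseteq B$. The frequency function $\Phi$ maps a component $\Gamma$ to its shadow monomial $\frac{\mathrm{vol}_p(\Lambda_\Gamma)}{\mathrm{vol}_d(\Lambda)}\nu_{d-p}R^{d-p}$,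 where, with $\phi\colon\mathbb{R}^d\to\mathbb{R}^d/\Lambda$ the projection, $\Lambda_\Gamma=\{u\in\Lambda:\gamma+u=\gamma\}$ for a connected component $\gamma$ of $\phi^{-1}(\Gamma)$, $p=\dim\Lambda_\Gamma$, $\mathrm{vol}_q$ is the $q$-volume of a unit cell ($\mathrm{vol}_0(\{0\})=1$) and $\nu_q$ the volume of the unit $q$-ball. Monomials are ordered by $tR^a<sR^b$ iff $a<b$, or $a=b$ and $t<s$. Two periodic merge trees are equal if there is a homeomorphism between them preserving height and frequency functions. Interleaving distance: continuous maps $\varphi\colon\mathcal{M}\to\mathcal{M}'$, $\psi\colon\mathcal{M}'\to\mathcal{M}$ (heights $h,h'$, frequencies $\Phi,\Phi'$) are $\varepsilon$-compatible ($\varepsilon\ge0$) if for all $\Gamma\in\mathcal{M}$, $\Gamma'\in\mathcal{M}'$: (i) $h'(\varphi(\Gamma))=h(\Gamma)+\varepsilon$, $h(\psi(\Gamma'))=h'(\Gamma')+\varepsilon$; (ii) $\psi(\varphi(\Gamma))$ covers $\Gamma$, $\varphi(\psi(\Gamma'))$ covers $\Gamma'$; (iii) $\Phi'(\varphi(\Gamma))\le\Phi(\Gamma)$, $\Phi(\psi(\Gamma'))\le\Phi'(\Gamma')$. $d_I(\mathcal{M},\mathcal{M}')$ is the infimum of the $\varepsilon$ admitting $\varepsilon$-compatible maps. *)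

From HB Require Import structures.
From mathcomp Require Import all_boot all_order all_algebra.
From mathcomp Require Import all_classical all_reals all_analysis.

Set Implicit Arguments.
Unset Strict Implicit.
Unset Printing Implicit Defensive.

Import Order.TTheory GRing.Theory Num.Theory numFieldNormedType.Exports.
Local Open Scope classical_set_scope.
Local Open Scope ring_scope.

(* Final (quotient-like) topology on a type Y induced by a map p : X -> Y:
   U is open iff p^-1(U) is open.  When p is surjective this is exactly the
   quotient topology of X by the fibres of p. *)
Definition final_top (X : topologicalType) (Y : Type) (p : X -> Y) : Type := Y.

Section FinalTop.
Context (X : topologicalType) (Y : Type) (p : X -> Y).
Local Notation FY := (final_top p).
HB.instance Definition _ := gen_eqMixin FY.
HB.instance Definition _ := gen_choiceMixin FY.

Definition final_open (U : set FY) := open (p @^-1` U).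

Lemma final_openT : final_open setT.
Proof. by rewrite /final_open preimage_setT; exact: openT. Qed.

Lemma final_openI : setI_closed final_open.
Proof. by move=> A B oA oB; rewrite /final_open preimage_setI; exact: openI. Qed.

Lemma final_open_bigU (I : Type) (f : I -> set FY) :
  (forall i, final_open (f i)) -> final_open (\bigcup_i f i).
Proof.
move=> oF; rewrite /final_open preimage_bigcup.
by apply: bigcup_open => i _; exact: oF.
Qed.

HB.instance Definition _ :=
  isOpenTopological.Build FY final_openT final_openI final_open_bigU.
End FinalTop.

Section Geometry.
Variables (R : realType) (d : nat).
Local Notation V := 'rV[R]_d.

Definition dotv (x a : V) : R := \sum_(i < d) x 0 i * a 0 i.

Definition translate (A : set V) (u : V) : set V := [set y + u | y in A].

Definition conv (S : seq V) : set V :=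
  [set x | exists w : 'I_(size S) -> R,
     (forall i, 0 <= w i) /\ \sum_i w i = 1 /\
     x = \sum_i w i *: nth 0 S (nat_of_ord i)].

Definition polytope (P : set V) : Prop :=
  exists S : seq V, S <> [::] /\ P = conv S.

Definition face (Q P : set V) : Prop :=
  Q !=set0 /\ exists (a : V) (b : R),
    (forall x, P x -> dotv x a <= b) /\ Q = P `&` [set x | dotv x a = b].

Definition cell_complex (K : set (set V)) : Prop :=
  [/\ forall s, K s -> polytope s,
      forall s t, K t -> face s t -> K s &
      forall s t, K s -> K t -> s `&` t !=set0 -> face (s `&` t) s /\ face (s `&` t) t].

Definition locally_finite (K : set (set V)) : Prop :=
  forall x : V, exists N : set V, nbhs x N /\ finite_set [set s | K s /\ s `&` N !=set0].

Definition lattice_gen (p : nat) (C : 'M[R]_(p, d)) : set V :=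
  [set u | exists z : 'rV[int]_p, u = map_mx (fun k : int => k%:~R) z *m C].

Definition lattice_dim_vol (L : set V) : nat * R :=
  xget (0%N, 1) [set pv | exists C : 'M[R]_(pv.1, d),
     [/\ row_free C, L = lattice_gen C & pv.2 = Num.sqrt (\det (C *m C^T))]].

End Geometry.

Fixpoint ball_vol (R : realType) (q : nat) : R :=
  match q with
  | 0 => 1
  | 1 => 2
  | (q'.+1 as q1).+1 => (2 * pi / q1.+1%:R) * ball_vol R q'
  end.

Section MergeTree.
Variables (R : realType) (d : nat) (B : 'M[R]_d)
          (K : set (set 'rV[R]_d)) (F : set 'rV[R]_d -> R).
Local Notation V := 'rV[R]_d.
Local Notation Lam := (lattice_gen B).

Definition coset (x : V) : set V := [set x + u | u in Lam].
Definition torus_pt := {C : set V | exists x, C = coset x}.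
Definition tproj (x : V) : torus_pt := exist _ (coset x) (ex_intro _ x erefl).
Definition torus : topologicalType := final_top tproj.

Definition sublevel (s : R) : set V :=
  \bigcup_(c in [set c | K c /\ F c <= s]) c.
Definition tsublevel (s : R) : set torus := tproj @` sublevel s.

Definition mt_base_set : set (torus * R) := [set q | tsublevel q.2 q.1].
Definition mt_base : topologicalType := set_type mt_base_set.

Definition mt_pt := {G : R * set torus |
  exists x, tsublevel G.1 x /\ G.2 = connected_component (tsublevel G.1) x}.

Definition mt_proj (q : mt_base) : mt_pt :=
  let s := (val q).2 in let x := (val q).1 in
  exist _ (s, connected_component (tsublevel s) x)
    (ex_intro _ x (conj (set_mem (valP q)) erefl)).

Definition merge_tree : topologicalType := final_top mt_proj.

Definition mt_height (G : merge_tree) : R := (proj1_sig (G : mt_pt)).1.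
Definition mt_comp (G : merge_tree) : set torus := (proj1_sig (G : mt_pt)).2.

Definition mt_covers (B0 A0 : merge_tree) : Prop :=
  mt_height A0 <= mt_height B0 /\ mt_comp A0 `<=` mt_comp B0.

(* shadow monomial, encoded as (exponent a, coefficient t) for t R^a *)
Definition mt_freq (G : merge_tree) : nat * R :=
  let pre := tproj @^-1` (mt_comp G) in
  let gam := xget set0 [set g | exists2 x, pre x & g = connected_component pre x] in
  let stab := [set u | Lam u /\ translate gam u = gam] in
  let pv := lattice_dim_vol stab in
  ((d - pv.1)%N, pv.2 / `|\det B| * ball_vol R (d - pv.1)).

End MergeTree.

Definition mono_le (R : realType) (m1 m2 : nat * R) : Prop :=
  (m1.1 < m2.1)%N \/ (m1.1 = m2.1 /\ m1.2 <= m2.2).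

Record pmt (R : realType) := PMT {
  pmt_d : nat;
  pmt_B : 'M[R]_pmt_d;
  pmt_K : set (set 'rV[R]_pmt_d);
  pmt_F : set 'rV[R]_pmt_d -> R;
  pmt_B_unit : pmt_B \in unitmx;
  pmt_K_complex : cell_complex pmt_K;
  pmt_K_locfin : locally_finite pmt_K;
  pmt_K_periodic : forall c u, lattice_gen pmt_B u -> pmt_K c ->
                     pmt_K (translate c u);
  pmt_F_periodic : forall c u, lattice_gen pmt_B u -> pmt_K c ->
                     pmt_F (translate c u) = pmt_F c;
  pmt_F_monotone : forall c t, pmt_K c -> pmt_K t -> face c t ->
                     pmt_F c <= pmt_F t
}.

Arguments pmt_d {R} _.
Arguments pmt_B {R} _.
Arguments pmt_K {R} _.
Arguments pmt_F {R} _.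
Definition MT (R : realType) (M : pmt R) : topologicalType :=
  @merge_tree R (pmt_d M) (pmt_B M) (pmt_K M) (pmt_F M).
Definition hgt (R : realType) (M : pmt R) : MT M -> R := fun G => @mt_height R (pmt_d M) (pmt_B M) (pmt_K M) (pmt_F M) G.
Definition freq (R : realType) (M : pmt R) : MT M -> nat * R := fun G => @mt_freq R (pmt_d M) (pmt_B M) (pmt_K M) (pmt_F M) G.
Definition covers (R : realType) (M : pmt R) : MT M -> MT M -> Prop :=
  fun G1 G2 => @mt_covers R (pmt_d M) (pmt_B M) (pmt_K M) (pmt_F M) G1 G2.

Definition pmt_equal (R : realType) (M M' : pmt R) : Prop :=
  exists (f : MT M -> MT M') (g : MT M' -> MT M),
    [/\ cancel f g /\ cancel g f, continuous f, continuous g,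
        forall G, hgt (f G) = hgt G & forall G, freq (f G) = freq G].

Definition compatible (R : realType) (M M' : pmt R) (e : R)
    (phi : MT M -> MT M') (psi : MT M' -> MT M) : Prop :=
  [/\ continuous phi, continuous psi,
      (forall G, hgt (phi G) = hgt G + e) /\ (forall G', hgt (psi G') = hgt G' + e),
      (forall G, covers (psi (phi G)) G) /\ (forall G', covers (phi (psi G')) G') &
      (forall G, mono_le (freq (phi G)) (freq G)) /\
      (forall G', mono_le (freq (psi G')) (freq G'))].

(* interleaving distance (an extended real; +oo if no compatible maps) *)
Definition d_I (R : realType) (M M' : pmt R) : \bar R :=
  ereal_inf [set e%:E | e in [set e : R | 0 <= e /\
     exists phi psi, @compatible R M M' e phi psi]].

(* Symmetry is immediate and the triangle inequality comes from composing
   compatible maps.  The composite is again compatible because a continuous map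
   raising all heights by [e] preserves covering: along the vertical path from
   a point to one covering it, the components of the images can only grow,
   since sublevel sets are right-continuous in the height and their components
   are relatively open.
   Distance zero forces equality.  The quotient complex has finitely many cells,
   so the sublevel sets of both trees change only at finitely many critical
   values.  Take [e]-compatible maps with [2 e] below every gap between critical
   values.  Lowering a point to the last critical value below it, applying the
   map and raising the image back to the original height gives height-preserving
   maps that are continuous, mutually inverse and frequency-preserving. *)

From HB Require Import structures.
From mathcomp Require Import all_boot all_order all_algebra.
From mathcomp Require Import all_classical all_reals all_analysis.
From mathcomp Require Import finmap ring lra.

Set Implicit Arguments.
Unset Strict Implicit.
Unset Printing Implicit Defensive.

Import Order.TTheory GRing.Theory Num.Theory Num.Def numFieldNormedType.Exports.
Local Open Scope classical_set_scope.
Local Open Scope ring_scope.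

Section FinalTopology.
Variables (X : topologicalType) (Y : Type) (p : X -> Y).

Lemma final_openE (U : set (final_top p)) : open U <-> open (p @^-1` U).
Proof. by []. Qed.

Lemma final_proj_continuous : continuous (p : X -> final_top p).
Proof. by apply/continuousP => A oA; rewrite -final_openE. Qed.

Lemma final_continuous (Z : topologicalType) (g : final_top p -> Z) :
  continuous (g \o p) -> continuous g.
Proof.
move=> gc; apply/continuousP => A oA; apply/final_openE.
by rewrite -comp_preimage; exact: (continuousP _).1 gc A oA.
Qed.

End FinalTopology.

Lemma open_setX (X Y : topologicalType) (O : set X) (P : set Y) :
  open O -> open P -> open (O `*` P).
Proof.
move=> oO oP; rewrite openE => -[a b] /= [Oa Pb].
exists (O, P) => /=; first by split; apply: open_nbhs_nbhs.
by move=> [x y] [/= Ox Py].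
Qed.

Section Connectedness.
Variable T : topologicalType.
Implicit Types A B L P : set T.

Lemma connected_sandwich A B : connected A -> A `<=` B -> B `<=` closure A ->
  connected B.
Proof.
move=> cA AB BcA; apply/connectedP => E [E0 BE sE].
have [|AE|AE] := connected_subset sE (_ : A `<=` E false `|` E true) cA.
- by rewrite -BE.
- case: (E0 true) => z Ez.
  have cz : closure (E false) z by apply: (closureS AE); apply: BcA; rewrite BE; right.
  by case: sE => /seteqP[+ _] _ => /(_ z (conj cz Ez)).
- case: (E0 false) => z Ez.
  have cz : closure (E true) z by apply: (closureS AE); apply: BcA; rewrite BE; left.
  by case: sE => _ /seteqP[+ _] => /(_ z (conj Ez cz)).
Qed.

Lemma connected_component_meet L P x : connected P -> P `<=` L ->
  P `&` connected_component L x !=set0 -> P `<=` connected_component L x.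
Proof.
move=> cP PL [w [Pw Cw]]; rewrite (same_connected_component Cw).
exact: connected_component_max.
Qed.

Lemma connected_component_subset A B x : A `<=` B -> A x ->
  connected_component A x `<=` connected_component B x.
Proof.
move=> AB Ax; apply: connected_component_max; last exact: component_connected.
  exact: connected_component_refl.
by move=> y /connected_component_sub /AB.
Qed.

(* The rest of [L] lies in the closed union of the closures of the pieces
   missing the component. *)
Lemma connected_component_relopen (I : choiceType) (D : set I) (P : I -> set T) L x :
  finite_set D -> (forall i, D i -> connected (P i)) ->
  L = \bigcup_(i in D) P i -> L x ->
  exists2 O, open O & O `&` L = connected_component L x.
Proof.
move=> finD cP LE Lx; set C := connected_component L x.
have PL i : D i -> P i `<=` L by move=> Di y Py; rewrite LE; exists i.
pose Z := \bigcup_(i in [set i | D i /\ P i `&` C = set0]) closure (P i).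
exists (~` Z).
  apply: closed_openC; apply: closed_bigcup => [|i _]; last exact: closed_closure.
  by apply: sub_finite_set finD => i [].
apply/seteqP; split=> y.
  move=> [nZy Ly]; move: (Ly); rewrite LE => -[j Dj Pjy].
  have [PC|PC] := pselect (P j `&` C !=set0).
    exact: connected_component_meet (cP j Dj) (PL j Dj) PC _ Pjy.
  exfalso; apply: nZy; exists j; last exact: subset_closure.
  by split=> //; apply/eqP; apply: contra_notT PC => /set0P.
move=> Cy; split; last exact: connected_component_sub Cy.
move=> [i /= [Di PiC] clPy].
have cPy : connected (P i `|` [set y]).
  apply: (connected_sandwich (cP i Di)); first by move=> z; left.
  by move=> z [Pz|->//]; exact: subset_closure.
have PyC : P i `|` [set y] `<=` C.
  apply: connected_component_meet cPy _ _; last by exists y; split=> //; right.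
  by move=> z [/(PL i Di)//|->]; exact: connected_component_sub Cy.
suff Pi0 : P i = set0 by move: clPy; rewrite Pi0 closure0.
by apply/seteqP; split=> // z Pz; rewrite -PiC; split=> //; apply: PyC; left.
Qed.

End Connectedness.

Lemma convex_connected (R : realType) (V : normedModType R) (A : set V) :
  (forall x y t, A x -> A y -> 0 <= t <= 1 -> A (x + t *: (y - x))) ->
  connected A.
Proof.
move=> cvA; have [[x0 Ax0]|A0] := pselect (A !=set0); last first.
  suff -> : A = set0 by exact: connected0.
  by apply/seteqP; split=> // z Az; apply: A0; exists z.
pose seg y := (fun t : R => x0 + t *: (y - x0)) @` `[0, 1]%classic.
have -> : A = \bigcup_(y in A) seg y.
  apply/seteqP; split=> [y Ay|z [y Ay [t t01 <-]]].
    exists y => //; exists 1; first by rewrite /= in_itv /= ler01 lexx.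
    by rewrite scale1r addrC subrK.
  by apply: cvA => //; move: t01; rewrite /= in_itv.
apply: bigcup_connected.
  exists x0 => y Ay; exists 0; first by rewrite /= in_itv /= lexx ler01.
  by rewrite scale0r addr0.
move=> y Ay; apply: connected_continuous_connected; first exact: segment_connected.
apply: continuous_subspaceT => t; apply: cvgD; first exact: cvg_cst.
by apply: cvgZ; [exact: cvg_id|exact: cvg_cst].
Qed.

Section MatrixContinuity.
Variables (R : realType) (d : nat) (B : 'M[R]_d).

Lemma norm_mulmx_le (l : 'rV[R]_d) : `|l *m B| <= `|l| * \sum_i \sum_j `|B i j|.
Proof.
have le_entry (m n : nat) (M : 'M[R]_(m, n)) i j : `|M i j| <= `|M|.
  by rewrite [X in _ <= X]/normr /= mx_normrE; exact: le_bigmax _ _ (i, j).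
rewrite [X in X <= _]/normr /= mx_normrE; apply/bigmax_leP; split.
  by apply: mulr_ge0 => //; apply: sumr_ge0 => i _; apply: sumr_ge0.
move=> [i0 j] _ /=; rewrite mxE; apply: le_trans (ler_norm_sum _ _ _) _.
rewrite mulr_sumr; apply: ler_sum => i _; rewrite normrM.
apply: le_trans (_ : `|l| * `|B i j| <= _).
  by apply: ler_wpM2r => //; rewrite (ord1 i0); exact: le_entry.
by apply: ler_wpM2l => //; rewrite (bigD1 j) //= lerDl; apply: sumr_ge0.
Qed.

Lemma mulmxr_continuous : continuous (fun l : 'rV[R]_d => l *m B).
Proof.
move=> x; set C := \sum_i \sum_j `|B i j|.
have C0 : 0 <= C by apply: sumr_ge0 => i _; apply: sumr_ge0.
apply/(@cvgrPdist_lt _ _ _ (nbhs x) (nbhs_filter x)) => e e0; near=> y.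
rewrite -mulmxBl; apply: le_lt_trans (norm_mulmx_le _) _.
have xy : `|x - y| < e / (C + 1).
  near: y; apply/nbhs_ballP; exists (e / (C + 1)) => /=.
    by rewrite divr_gt0 // ltr_wpDl.
  by move=> z; rewrite mx_norm_ball.
apply: le_lt_trans (_ : `|x - y| * (C + 1) < e).
  by apply: ler_wpM2l => //; rewrite lerDl.
by rewrite -ltr_pdivlMr // ltr_wpDl.
Unshelve. all: by end_near.
Qed.

End MatrixContinuity.

Section FiniteReals.
Variable R : realDomainType.
Implicit Types X : set R.

Lemma finite_set_max X : finite_set X -> X !=set0 ->
  exists2 m, X m & forall x, X x -> x <= m.
Proof.
move=> /finite_seqP[s ->] [x0 Xx0]; exists (\big[Order.max/x0]_(x <- s) x).
  by rewrite big_seq; apply: big_ind => // a b sa sb; rewrite maxEle; case: ifP.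
by move=> x xs; exact: le_bigmax_seq.
Qed.

Lemma finite_set_pos_lb X : finite_set X -> (forall x, X x -> 0 < x) ->
  exists2 e, 0 < e & forall x, X x -> e <= x.
Proof.
move=> /finite_seqP[s ->] Xpos; exists (\big[Order.min/1]_(x <- s) x).
  rewrite big_seq; apply: (big_ind (fun m => 0 < m)) => [|a b a0 b0|x /Xpos//].
  - exact: ltr01.
  - by rewrite lt_min a0 b0.
by move=> x xs; exact: ge_bigmin_seq.
Qed.

Lemma finite_set_gap X : finite_set X ->
  exists2 g, 0 < g & forall x y, X x -> X y -> x < y -> g <= y - x.
Proof.
move=> Xfin; pose D := [set p.2 - p.1 | p in [set p | X p.1 /\ X p.2 /\ p.1 < p.2]].
have Dfin : finite_set D.
  by apply/finite_image/(sub_finite_set _ (finite_setX Xfin Xfin)) => p [? []].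
have Dpos x : D x -> 0 < x by move=> [p [_ [_ lt]] <-]; rewrite subr_gt0.
have [g g0 gP] := finite_set_pos_lb Dfin Dpos.
by exists g => // x y Xx Xy xy; apply: gP; exists (x, y).
Qed.

End FiniteReals.

Section LatticeTorus.
Variables (R : realType) (d : nat) (B : 'M[R]_d).
Local Notation V := 'rV[R]_d.
Local Notation Lam := (lattice_gen B).

Lemma lattice_genD u v : Lam u -> Lam v -> Lam (u + v).
Proof.
move=> [z1 ->] [z2 ->]; exists (z1 + z2); rewrite -mulmxDl; congr (_ *m _).
by apply/matrixP => i j; rewrite !mxE intrD.
Qed.

Lemma lattice_genN u : Lam u -> Lam (- u).
Proof.
move=> [z ->]; exists (- z); rewrite -mulNmx; congr (_ *m _).
by apply/matrixP => i j; rewrite !mxE intrN.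
Qed.

Lemma lattice_genB u v : Lam u -> Lam v -> Lam (u - v).
Proof. by move=> Lu Lv; apply: lattice_genD => //; exact: lattice_genN. Qed.

Lemma tproj_eq (x y : V) : Lam (x - y) -> tproj B x = tproj B y.
Proof.
move=> Lxy; apply: eq_exist; apply/seteqP; split=> z [u Lu <-].
  exists (x - y + u); first exact: lattice_genD.
  by rewrite addrA [y + _]addrC subrK.
exists (u - (x - y)); first exact: lattice_genB.
by rewrite opprB addrCA [x + _]addrC subrK addrC.
Qed.

Lemma translateK (c : set V) u : translate (translate c u) (- u) = c.
Proof.
apply/seteqP; split=> [y [z [w cw <-] <-]|y cy]; first by rewrite addrK.
by exists (y + u); [exists y|rewrite addrK].
Qed.

Lemma tproj_translate (c : set V) u : Lam u ->
  tproj B @` translate c u = tproj B @` c.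
Proof.
move=> Lu; apply/seteqP; split=> [z [y [w cw <-] <-]|z [y cy <-]].
  by exists w => //; apply: tproj_eq; rewrite opprD addNKr; exact: lattice_genN.
exists (y + u); first by exists y.
by apply: tproj_eq; rewrite addrC addKr.
Qed.

Definition unit_cube : set V := [set v | forall i, `[0, 1]%classic (v ord0 i)].

Lemma lattice_cube_decomp (x : V) : B \in unitmx ->
  exists2 u, Lam u & exists2 l, unit_cube l & x = l *m B + u.
Proof.
move=> Bu; pose l0 := x *m invmx B.
pose z : 'rV[int]_d := \row_j Num.floor (l0 ord0 j).
pose mz := map_mx (fun k : int => k%:~R : R) z.
exists (mz *m B); first by exists z.
exists (l0 - mz); last by rewrite mulmxBl subrK /l0 mulmxKV.
move=> i; rewrite !mxE /= in_itv /=; apply/andP; split.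
  by rewrite subr_ge0 Num.Theory.floor_le.
rewrite lerBlDl; apply: ltW; rewrite -[1 in X in _ < X]/(1%:~R) -intrD.
exact: Num.Theory.floorD1_gt.
Qed.

(* A compact fundamental domain meets only finitely many cells of a locally
   finite complex. *)
Lemma finite_cells_mod_lattice (K : set (set V)) : B \in unitmx ->
  locally_finite K -> (forall c u, Lam u -> K c -> K (translate c u)) ->
  exists2 S : set (set V), finite_set S &
    S `<=` K /\ forall c, K c -> c !=set0 ->
      exists2 c', S c' & exists2 u, Lam u & c = translate c' u.
Proof.
move=> Bu Kloc Kper.
have cube_compact : compact ((fun l => l *m B) @` unit_cube).
  apply: continuous_compact; first exact/continuous_subspaceT/mulmxr_continuous.
  by apply: (@rV_compact R d (fun=> `[0, 1]%classic)) => _; exact: segment_compact.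
pose N x := proj1_sig (cid (Kloc x)).
have NP x : nbhs x (N x) /\ finite_set [set s | K s /\ s `&` N x !=set0].
  exact: (proj2_sig (cid (Kloc x))).
move: cube_compact; rewrite compact_cover => cube_compact.
have [D _ cov] := cube_compact V _ (fun x => interior (N x))
  (fun x _ => @open_interior _ (N x)) (fun x Dx => ex_intro2 _ _ x Dx (NP x).1).
exists (\bigcup_(w in [set` D]) [set s | K s /\ s `&` N w !=set0]).
  by apply: bigcup_finite; [exact: finite_fset|move=> x _; exact: (NP x).2].
split=> [s [x _ []]//|c Kc [y cy]].
have [u Lu [l cl yE]] := lattice_cube_decomp y Bu.
have [x Dx Nx] := cov (l *m B) (ex_intro2 _ _ l cl erefl).
exists (translate c (- u)); last by exists u => //; rewrite -{2}(opprK u) translateK.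
exists x => //; split; first by apply: Kper => //; exact: lattice_genN.
exists (l *m B); split; last exact: interior_subset.
by exists y => //; rewrite yE addrK.
Qed.

End LatticeTorus.

Section Polytopes.
Variables (R : realType) (d : nat).
Local Notation V := 'rV[R]_d.

Lemma conv_convex (S : seq V) x y t : conv S x -> conv S y -> 0 <= t <= 1 ->
  conv S (x + t *: (y - x)).
Proof.
move=> [w [w0 [w1 ->]]] [w' [w'0 [w'1 ->]]] /andP[t0 t1].
exists (fun i => w i + t * (w' i - w i)); split; [|split].
- move=> i; rewrite (_ : w i + _ = (1 - t) * w i + t * w' i); last by ring.
  by rewrite addr_ge0 // mulr_ge0 // subr_ge0.
- by rewrite big_split /= -mulr_sumr sumrB w1 w'1 subrr mulr0 addr0.
- rewrite -sumrB scaler_sumr -big_split /=; apply: eq_bigr => i _.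
  by rewrite -scalerBl scalerA -scalerDl.
Qed.

Lemma polytope_neq0 (c : set V) : polytope c -> c !=set0.
Proof.
move=> [[|a s] [S0 ->]]; first by case: S0.
exists a,  (fun i => if nat_of_ord i == 0%N then 1 else 0); split; [|split].
- by move=> i; case: ifP.
- by rewrite big_ord_recl /= big1 ?addr0.
- by rewrite big_ord_recl /= scale1r big1 ?addr0 // => i _; rewrite scale0r.
Qed.

Lemma polytope_connected (c : set V) : polytope c -> connected c.
Proof. by move=> [S [_ ->]]; apply: convex_connected => x y t; exact: conv_convex. Qed.

End Polytopes.

Definition tlevel (R : realType) (M : pmt R) (s : R) : set (torus (pmt_B M)) :=
  tsublevel (pmt_K M) (pmt_F M) s.
Definition mcomp (R : realType) (M : pmt R) (G : MT M) : set (torus (pmt_B M)) :=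
  mt_comp G.
Arguments tlevel {R} M s.
Arguments mcomp {R M} G.

Section Sublevels.
Variables (R : realType) (M : pmt R).
Local Notation B := (pmt_B M).
Local Notation K := (pmt_K M).
Local Notation F := (pmt_F M).
Local Notation V := 'rV[R]_(pmt_d M).
Local Notation Lam := (lattice_gen B).
Local Notation tp := (tproj B).
Local Notation L := (tlevel M).

Lemma tlevel_mono r r' : r <= r' -> L r `<=` L r'.
Proof.
move=> rr' z [y [c [Kc Fc] cy] <-]; exists y => //; exists c => //.
by split => //; exact: le_trans rr'.
Qed.

Lemma pmt_cell_polytope c : K c -> polytope c.
Proof. by case: (pmt_K_complex M) => + _ _; apply. Qed.

Let reps_spec := finite_cells_mod_lattice (pmt_B_unit M) (@pmt_K_locfin _ M)
  (fun c u Lu Kc => pmt_K_periodic Lu Kc).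

Definition cell_reps : set (set V) := proj1_sig (cid2 reps_spec).

Lemma cell_reps_finite : finite_set cell_reps.
Proof. exact: (proj2_sig (cid2 reps_spec)).1. Qed.

Lemma cell_reps_sub : cell_reps `<=` K.
Proof. exact: (proj2_sig (cid2 reps_spec)).2.1. Qed.

Lemma cell_reps_cover c : K c ->
  exists2 c', cell_reps c' & exists2 u, Lam u & c = translate c' u.
Proof.
move=> Kc; apply: (proj2_sig (cid2 reps_spec)).2.2 => //.
exact/polytope_neq0/pmt_cell_polytope.
Qed.

Lemma tlevel_reps s : L s = \bigcup_(c in [set c | cell_reps c /\ F c <= s]) tp @` c.
Proof.
apply/seteqP; split=> z.
  move=> [y [c [Kc Fc] cy] <-]; have [c' Rc' [u Lu cE]] := cell_reps_cover Kc.
  have Fc' : F c = F c' by rewrite cE (pmt_F_periodic Lu (cell_reps_sub Rc')).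
  exists c'; first by split => //; rewrite -Fc'.
  by rewrite -(tproj_translate c' Lu) -cE; exists y.
move=> [c [Rc Fc] [y cy <-]]; exists y => //; exists c => //.
by split => //; exact: cell_reps_sub.
Qed.

Definition crit_values : set R := F @` cell_reps.

Lemma crit_values_finite : finite_set crit_values.
Proof. exact/finite_image/cell_reps_finite. Qed.

Lemma tlevel_crit_eq r r' : (forall w, crit_values w -> (w <= r) = (w <= r')) ->
  L r = L r'.
Proof.
move=> H; rewrite !tlevel_reps; congr (\bigcup_(c in _) _).
by apply/seteqP; split=> c [Rc Fc]; split=> //; [rewrite -H|rewrite H] => //; exists c.
Qed.

Lemma tlevel_right_const r0 :
  exists2 e, 0 < e & forall r, r0 <= r -> r < r0 + e -> L r = L r0.
Proof.
have [e e0 He] : exists2 e, 0 < e &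
    forall x, [set w - r0 | w in [set w | crit_values w /\ r0 < w]] x -> e <= x.
  apply: finite_set_pos_lb; last by move=> _ [w [_ h] <-]; rewrite subr_gt0.
  by apply: finite_image; apply: sub_finite_set crit_values_finite => w [].
exists e => // r r0r rr0; apply: tlevel_crit_eq => w Ww.
apply/idP/idP => [wr|wr0]; last exact: le_trans r0r.
rewrite leNgt; apply/negP => r0w.
have := He (w - r0) (ex_intro2 _ _ w (conj Ww r0w) erefl).
by apply/negP; rewrite -ltNge; lra.
Qed.

Lemma cell_image_connected c : K c -> connected (tp @` c : set (torus B)).
Proof.
move=> Kc; apply: connected_continuous_connected.
  exact/polytope_connected/pmt_cell_polytope.
exact/continuous_subspaceT/final_proj_continuous.
Qed.

Lemma tlevel_component_relopen s x : L s x ->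
  exists2 O, open O & O `&` L s = connected_component (L s) x.
Proof.
apply: (connected_component_relopen _ _ (tlevel_reps s)).
- by apply: sub_finite_set cell_reps_finite => c [].
- by move=> c [Rc _]; apply: cell_image_connected; exact: cell_reps_sub.
Qed.

End Sublevels.
Arguments cell_reps {R} M _.
Arguments crit_values {R} M _.

Section MergeTreePoints.
Variables (R : realType) (M : pmt R).
Local Notation B := (pmt_B M).
Local Notation L := (tlevel M).
Local Notation base := (mt_base (pmt_B M) (pmt_K M) (pmt_F M)).
Local Notation mproj := (@mt_proj R _ (pmt_B M) (pmt_K M) (pmt_F M)).
Implicit Types G H : MT M.

Lemma coversE G1 G2 : covers G1 G2 <-> hgt G2 <= hgt G1 /\ mcomp G2 `<=` mcomp G1.
Proof. by []. Qed.

Lemma mcompP G : exists2 x, L (hgt G) x & mcomp G = connected_component (L (hgt G)) x.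
Proof. by case: G => [[s C] [x [Lx CE]]] /=; exists x. Qed.

Lemma mt_ext G1 G2 : hgt G1 = hgt G2 -> mcomp G1 = mcomp G2 -> G1 = G2.
Proof.
case: G1 G2 => [[s1 C1] P1] [[s2 C2] P2] /= e1 e2.
rewrite /hgt /mcomp /mt_height /mt_comp /= in e1 e2.
by apply: eq_exist; rewrite e1 e2.
Qed.

Lemma mt_of_point s x : L s x ->
  exists G, hgt G = s /\ mcomp G = connected_component (L s) x.
Proof.
move=> Lx; pose C := connected_component (L s) x.
by exists (exist _ (s, C) (ex_intro _ x (conj Lx erefl))).
Qed.

Lemma mcomp_point G : exists2 x, L (hgt G) x & mcomp G x.
Proof.
by have [x Lx ->] := mcompP G; exists x => //; exact: connected_component_refl.
Qed.

Lemma mcomp_sub G : mcomp G `<=` L (hgt G).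
Proof. by have [x Lx ->] := mcompP G; exact: connected_component_sub. Qed.

Lemma mcompE G y : mcomp G y -> mcomp G = connected_component (L (hgt G)) y.
Proof. by have [x Lx ->] := mcompP G; exact: same_connected_component. Qed.

Lemma mcomp_eq G1 G2 : L (hgt G1) = L (hgt G2) ->
  mcomp G1 `<=` mcomp G2 -> mcomp G1 = mcomp G2.
Proof.
move=> LE sub; have [x Lx Gx] := mcomp_point G1.
by rewrite (mcompE Gx) (mcompE (sub _ Gx)) LE.
Qed.

Lemma mcomp_sub_level G H y : mcomp G y -> mcomp H y ->
  hgt G <= hgt H \/ L (hgt G) = L (hgt H) -> mcomp G `<=` mcomp H.
Proof.
move=> Gy Hy; rewrite (mcompE Gy) (mcompE Hy) => -[le|-> //].
exact/connected_component_subset/(mcomp_sub Gy)/tlevel_mono.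
Qed.

Lemma mt_relevel G r : L r = L (hgt G) ->
  exists G', hgt G' = r /\ mcomp G' = mcomp G.
Proof.
move=> LE; have [x Lx CE] := mcompP G; have Lr : L r x by rewrite LE.
by have [G' [h1 h2]] := mt_of_point Lr; exists G'; rewrite h2 CE LE.
Qed.

Lemma freq_mcomp G1 G2 : mcomp G1 = mcomp G2 -> freq G1 = freq G2.
Proof. by rewrite /freq /mt_freq /mcomp => ->. Qed.

Lemma mcomp_mt_proj (q : base) :
  mcomp (mproj q : MT M) = connected_component (L (set_val q).2) (set_val q).1.
Proof. by []. Qed.

Lemma mt_base_level (q : base) : L (set_val q).2 (set_val q).1.
Proof. by case: q => -[y r] /= /set_mem. Qed.

Lemma mt_proj_self (q : base) : mcomp (mproj q : MT M) (set_val q).1.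
Proof. exact/connected_component_refl/mt_base_level. Qed.

Lemma mt_projE G y : mcomp G y ->
  exists q : base, set_val q = (y, hgt G) /\ mproj q = G.
Proof.
move=> Gy; have Ly : L (hgt G) y by exact: mcomp_sub.
exists (exist _ (y, hgt G) (mem_set Ly)); split => //.
by apply: mt_ext => //; rewrite mcomp_mt_proj /= -(mcompE Gy).
Qed.

Lemma open_mt_base (A : set (torus B * R)) :
  open A -> open (set_val @^-1` A : set base).
Proof. by move=> oA; exists A. Qed.

Lemma mt_base_continuous (X : topologicalType) (f : X -> base) :
  continuous (set_val \o f) -> continuous f.
Proof.
move=> fc; apply/continuousP => Q [A oA <-].
by rewrite -comp_preimage; exact: (continuousP _).1 fc A oA.
Qed.

Lemma open_real_nbhs (U : set R) x : open U -> U x ->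
  exists2 e, 0 < e & forall y, `|y - x| < e -> U y.
Proof.
move=> oU Ux; have /nbhs_ballP[e e0 sub] := open_nbhs_nbhs (conj oU Ux).
by exists e => // y yx; apply: sub; rewrite -ball_normE /ball_ /= distrC.
Qed.

Lemma mt_open_vertical (U : set (MT M)) G y : open U -> U G -> mcomp G y ->
  exists2 e, 0 < e & forall G', mcomp G' y -> `|hgt G' - hgt G| < e -> U G'.
Proof.
move=> oU UG Gy; have [q [qE qG]] := mt_projE Gy.
have /continuousP/(_ _ oU) [A oA AE] : continuous (mproj : base -> MT M).
  exact: final_proj_continuous.
pose g r : (torus B * R)%type := (y, r).
have gc : continuous g.
  move=> r; exact: (@cvg_pair _ _ _ (nbhs r) (nbhs y) (nbhs r) _ _ _
    (fun=> y) id (cvg_cst _) cvg_id).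
have Ag : (g @^-1` A) (hgt G).
  have : (mproj @^-1` U) q by rewrite /preimage /= qG.
  by rewrite -AE /preimage /= qE.
have [e e0 He] := open_real_nbhs ((continuousP _).1 gc A oA) Ag.
exists e => // G' G'y /He AG'; have [q' [q'E <-]] := mt_projE G'y.
have : (set_val @^-1` A) q' by rewrite /preimage /= q'E.
by rewrite AE.
Qed.

End MergeTreePoints.

Section LocalStructure.
Variables (R : realType) (M : pmt R).
Local Notation B := (pmt_B M).
Local Notation L := (tlevel M).
Local Notation base := (mt_base (pmt_B M) (pmt_K M) (pmt_F M)).
Local Notation mproj := (@mt_proj R _ (pmt_B M) (pmt_K M) (pmt_F M)).
Implicit Types G H : MT M.

(* Sublevel sets are right-continuous and components relatively open. *)
Lemma mt_local_box H : exists N eta, [/\ open N, 0 < eta, N `&` L (hgt H) = mcomp H &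
  forall q : base, N (set_val q).1 -> ball (hgt H) eta (set_val q).2 ->
    mcomp (mproj q : MT M) `<=` mcomp H /\
    (hgt H <= (set_val q).2 -> mcomp (mproj q : MT M) = mcomp H)].
Proof.
set r0 := hgt H; have [eta eta0 rc] := tlevel_right_const M r0.
have [y0 Ly0 Hy0] := mcomp_point H.
have [N oN NE] := tlevel_component_relopen Ly0; rewrite -(mcompE Hy0) in NE.
exists N, eta; split=> // q Nq; rewrite ball_itv /= in_itv /= => /andP[_ hi].
have rcq : r0 <= (set_val q).2 -> L (set_val q).2 = L r0 by move=> r0t; exact: rc.
have Hq : mcomp H (set_val q).1.
  rewrite -NE; split=> //; have Lq := mt_base_level q.
  have [/tlevel_mono|/ltW/rcq E] := leP (set_val q).2 r0; first exact.
  by rewrite -E.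
have sub : mcomp (mproj q : MT M) `<=` mcomp H.
  apply: mcomp_sub_level (mt_proj_self q) Hq _.
  by have [|/ltW/rcq] := leP (set_val q).2 r0; [left|right].
by split=> // r0t; apply: mcomp_eq sub; exact: rcq.
Qed.

Lemma mt_local_nbhd H : exists U : set (MT M), [/\ open U, U H &
  forall G, U G -> mcomp G `<=` mcomp H /\ (hgt H <= hgt G -> mcomp G = mcomp H)].
Proof.
have [N [eta [oN eta0 NE box]]] := mt_local_box H.
exists [set G | ball (hgt H) eta (hgt G) /\ mcomp G `<=` mcomp H]; split.
- apply/final_openE.
  suff -> : mproj @^-1` [set G | ball (hgt H) eta (hgt G) /\ mcomp G `<=` mcomp H]
      = set_val @^-1` (N `*` ball (hgt H) eta).
    by apply/open_mt_base/open_setX => //; exact: ball_open.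
  apply/seteqP; split=> q /=.
    by move=> [bq sub]; split=> //; have /sub := mt_proj_self q; rewrite -NE => -[].
  by move=> [Nq bq]; split=> //; exact: (box q Nq bq).1.
- by split; [exact: ballxx|].
- move=> G [bG sub]; split=> //; have [y _ Gy] := mcomp_point G.
  have [q [qE qG]] := mt_projE Gy.
  have Nq : N (set_val q).1 by rewrite qE; have /sub := Gy; rewrite -NE => -[].
  have bq : ball (hgt H) eta (set_val q).2 by rewrite qE.
  by have [_ eqH] := box q Nq bq; move=> HG; rewrite -qG eqH // qE.
Qed.

Lemma mcomp_cell H : exists c, [/\ cell_reps M c, pmt_F M c <= hgt H &
  (tproj B @` c : set (torus B)) `<=` mcomp H].
Proof.
have [y Ly Hy] := mcomp_point H; move: (Ly); rewrite tlevel_reps.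
move=> [c [Rc Fc] [z cz zy]]; exists c; split=> //; rewrite (mcompE Hy).
apply: connected_component_meet; first exact/cell_image_connected/cell_reps_sub.
  by rewrite tlevel_reps => w cw; exists c.
by exists y; split; [exists z|exact: connected_component_refl].
Qed.

(* Each point lies above one of finitely many cell representatives, and each
   of them has a vertical neighbourhood in [U]. *)
Lemma mt_open_below (U : set (MT M)) H : open U -> U H ->
  exists2 eta, 0 < eta &
    forall G, `|hgt G - hgt H| < eta -> mcomp G `<=` mcomp H -> U G.
Proof.
move=> oU UH; pose pt (c : set 'rV[R]_(pmt_d M)) := xget 0 c.
pose good c := cell_reps M c /\ mcomp H (tproj B (pt c)).
have ex c : exists e, 0 < e /\ (good c -> forall G,
    mcomp G (tproj B (pt c)) -> `|hgt G - hgt H| < e -> U G).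
  have [[_ Hc]|NG] := pselect (good c); last by exists 1; split=> // /NG [].
  by have [e e0 He] := mt_open_vertical oU UH Hc; exists e; split=> // _.
have [ef efP] := choice ex.
have [eta eta0 etaP] : exists2 eta, 0 < eta & forall x, (ef @` good) x -> eta <= x.
  apply: finite_set_pos_lb; last by move=> _ [c _ <-]; exact: (efP c).1.
  by apply/finite_image; apply: sub_finite_set (cell_reps_finite M) => c [].
exists eta => // G Gs GH; have [c [Rc _ cG]] := mcomp_cell G.
have ptc : c (pt c).
  by apply: xgetPex; exact/polytope_neq0/pmt_cell_polytope/cell_reps_sub.
have Gpt : mcomp G (tproj B (pt c)) by apply: cG; exists (pt c).
have goodc : good c by split=> //; exact: GH.
have le_eta : eta <= ef c by apply: etaP; exists c.
exact: (efP c).2 goodc G Gpt (lt_le_trans Gs le_eta).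
Qed.

Lemma crit_value_below H : exists2 w, crit_values M w & w <= hgt H.
Proof. by have [c [Rc Fc _]] := mcomp_cell H; exists (pmt_F M c) => //; exists c. Qed.

Lemma mt_vertical_path A x : mcomp A x -> exists gam : R -> MT M,
  [/\ continuous gam, forall t, hgt (gam t) = Num.max t (hgt A) &
      forall t, mcomp (gam t) = connected_component (L (Num.max t (hgt A))) x].
Proof.
move=> Ax; set a := hgt A.
have Lt t : L (Num.max t a) x.
  by apply: tlevel_mono (mcomp_sub Ax); rewrite le_max lexx orbT.
pose q t : base := exist _ (x, Num.max t a) (mem_set (Lt t)).
exists (mproj \o q); split=> // t.
apply: continuous_comp; last exact: final_proj_continuous.
apply: (mt_base_continuous (f := q)) => {}t.
exact: (@cvg_pair _ _ _ (nbhs t) (nbhs x) (nbhs (Num.max t a)) _ _ _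
  (fun=> x) (fun t => Num.max t a) (cvg_cst _)
  (@continuous_max _ _ id (fun=> a) t cvg_id (cvg_cst _))).
Qed.

End LocalStructure.

Lemma sub_of_local_right_const (R : realType) (T : Type) (rho : R -> set T) a b :
  (forall t, exists2 del, 0 < del & forall t', `|t' - t| < del ->
     rho t' `<=` rho t /\ (t <= t' -> rho t' = rho t)) ->
  a <= b -> rho a `<=` rho b.
Proof.
move=> loc ab; set S := [set t | a <= t <= b /\ rho a `<=` rho t].
have Sa : S a by split=> //; rewrite lexx ab.
have hS : has_sup S by split; [exists a|exists b => t [/andP[]]].
have ub := sup_upper_bound hS; set ts := sup S.
have tsb : ts <= b by apply: ge_sup; [exact: hS.1|move=> t [/andP[_ ?] _]].
have ats : a <= ts by exact: ub.
have [del del0 Hd] := loc ts.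
have Sts : S ts.
  have [t1 St1 lt1] := sup_adherent del0 hS.
  split; first by rewrite ats tsb.
  apply: subset_trans St1.2 (Hd t1 _).1.
  by rewrite ler0_norm ?subr_le0 ?ub // opprB ltrBlDr addrC -ltrBlDr.
suff <- : ts = b by exact: Sts.2.
apply/eqP; rewrite eq_le tsb leNgt; apply/negP => tslt.
pose t2 := Num.min (ts + del / 2) b.
have tst2 : ts < t2 by rewrite lt_min tslt andbT; lra.
have t2del : t2 <= ts + del / 2 by rewrite ge_min lexx.
have /ub : S t2.
  split; first by rewrite ge_min lexx orbT andbT (le_trans ats (ltW tst2)).
  rewrite ((Hd t2 _).2 (ltW tst2)); first exact: Sts.2.
  by rewrite gtr0_norm ?subr_gt0 //; lra.
by rewrite leNgt tst2.
Qed.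

Section ShiftCovers.
Variables (R : realType) (M M' : pmt R) (e : R) (phi : MT M -> MT M').
Hypothesis phic : continuous phi.
Hypothesis phih : forall G, hgt (phi G) = hgt G + e.

Lemma shift_covers A A' : covers A' A -> covers (phi A') (phi A).
Proof.
move=> /coversE[ab sub]; have [x _ Ax] := mcomp_point A.
have [gam [gc hgam cgam]] := mt_vertical_path Ax.
have gamE G : mcomp G x -> hgt A <= hgt G -> gam (hgt G) = G.
  move=> Gx aG; apply: mt_ext; first by rewrite hgam; apply/max_idPl.
  by rewrite cgam (max_idPl aG) (mcompE Gx).
apply/coversE; split; first by rewrite !phih lerD2r.
rewrite -(gamE A) // -(gamE A' (sub _ Ax) ab).
apply: (@sub_of_local_right_const _ _ (fun t => mcomp (phi (gam t)))) ab => t.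
have [U [oU Ut Uprop]] := mt_local_nbhd (phi (gam t)).
have pc : continuous (phi \o gam).
  by move=> t0; apply: continuous_comp; [exact: gc|exact: phic].
have [del del0 Hd] := open_real_nbhs ((continuousP _).1 pc U oU) Ut.
exists del => // t' tt'; have [s1 s2] := Uprop _ (Hd _ tt'); split=> // le_tt'.
by apply: s2; rewrite !phih !hgam lerD2r; exact: le_max2.
Qed.

End ShiftCovers.

Section LevelMaps.
Variables (R : realType) (M1 M2 : pmt R) (f : MT M1 -> MT M2).
Hypothesis fh : forall G, hgt (f G) = hgt G.
Hypothesis fm : forall G1 G2, covers G2 G1 -> mcomp (f G1) `<=` mcomp (f G2).

Lemma level_map_continuous : continuous f.
Proof.
apply: final_continuous; apply/continuousP => U oU; rewrite openE => q Uq.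
set G := mt_proj q : MT M1.
have [eta eta0 Unear] := mt_open_below oU Uq.
have [N [e1 [oN e10 NE box]]] := mt_local_box G.
have [e2 e20 rc2] := tlevel_right_const M2 (hgt G).
set del := Num.min eta (Num.min e1 e2).
have [del_eta del_e1 del_e2] : [/\ del <= eta, del <= e1 & del <= e2].
  by rewrite !ge_min !lexx /= !orbT.
apply: (@filterS _ _ _ (set_val @^-1` (N `*` ball (hgt G) del))).
  move=> q' [Nq' bq']; set G' := mt_proj q' : MT M1.
  have [sub eqc] := box q' Nq' (le_ball del_e1 bq').
  move: bq'; rewrite -ball_normE /ball_ /= => bq'.
  apply: Unear; first by rewrite !fh distrC; exact: lt_le_trans bq' del_eta.
  have [le_s|lt_s] := leP (hgt G') (hgt G); first exact/fm/coversE.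
  have covG' : covers G' G.
    by apply/coversE; split; [exact: ltW|rewrite (eqc (ltW lt_s))].
  suff -> : mcomp (f G') = mcomp (f G) by [].
  apply/esym/mcomp_eq; last exact: fm.
  rewrite !fh rc2 // ?(ltW lt_s) //.
  change (hgt G') with (set_val q').2.
  by move: bq'; rewrite ltr_distlC => /andP[_]; lra.
apply: open_nbhs_nbhs; split.
  by apply/open_mt_base/open_setX => //; exact: ball_open.
have del0 : 0 < del by rewrite !lt_min eta0 e10 e20.
by split; [have := mt_proj_self q; rewrite -NE => -[]|exact: ballxx].
Qed.

End LevelMaps.

Section Snap.
Variables (R : realDomainType) (W : set R).
Hypothesis W_finite : finite_set W.

Definition snap (s : R) : R :=
  xget s [set z | (W z /\ z <= s) /\ forall w, W w -> w <= s -> w <= z].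

Lemma snapP s : (exists2 w, W w & w <= s) ->
  [/\ W (snap s), snap s <= s & forall w, W w -> w <= s -> w <= snap s].
Proof.
move=> [w0 Ww0 w0s].
have Ws_finite : finite_set [set w | W w /\ w <= s].
  by apply: sub_finite_set W_finite => w [].
have [m [Wm ms] mmax] := finite_set_max Ws_finite (ex_intro _ w0 (conj Ww0 w0s)).
suff [[Wz zs] zmax] : [set z | (W z /\ z <= s) /\ forall w, W w -> w <= s -> w <= z]
    (snap s) by [].
by apply: xgetPex; exists m; split=> // w Ww ws; exact: mmax.
Qed.

Lemma snap_le_eq (e : R) s r w :
  (forall w1 w2, W w1 -> W w2 -> w1 < w2 -> e *+ 2 < w2 - w1) ->
  (exists2 w, W w & w <= s) -> snap s <= r -> r <= Num.max s (snap s + e *+ 2) ->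
  W w -> (w <= r) = (w <= snap s).
Proof.
move=> gap hs zr; rewrite le_max => hr Ww; have [Wz zs zmax] := snapP hs.
apply/idP/idP => [wr|wz]; last exact: le_trans zr.
have [ws|sw] := leP w s; first exact: zmax.
rewrite leNgt; apply/negP => zw; have := gap _ _ Wz Ww zw.
by case/orP: hr => hr; lra.
Qed.

End Snap.

Section SnapMap.
Variables (R : realType) (W : set R) (e : R).
Hypothesis W_finite : finite_set W.
Hypothesis e_ge0 : 0 <= e.
Hypothesis W_gap : forall w1 w2, W w1 -> W w2 -> w1 < w2 -> e *+ 2 < w2 - w1.

Lemma tlevel_snap (M : pmt R) s r : crit_values M `<=` W ->
  (exists2 w, W w & w <= s) -> snap W s <= r -> r <= Num.max s (snap W s + e *+ 2) ->
  tlevel M r = tlevel M (snap W s).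
Proof.
move=> WM hs zr hr; apply: tlevel_crit_eq => w /WM Ww.
exact: snap_le_eq W_gap hs zr hr Ww.
Qed.

Variables (M1 M2 : pmt R) (phi : MT M1 -> MT M2).
Hypothesis W1 : crit_values M1 `<=` W.
Hypothesis W2 : crit_values M2 `<=` W.
Hypothesis phic : continuous phi.
Hypothesis phih : forall G, hgt (phi G) = hgt G + e.

Lemma snap_below (G : MT M1) : exists2 w, W w & w <= hgt G.
Proof. by have [w /W1 Ww ws] := crit_value_below G; exists w. Qed.

(* Lower [G] to the critical level below it, shift it by [phi] (which crosses no
   critical value) and raise the image back to the height of [G]. *)
Lemma snap_map_ex (G : MT M1) : exists H : MT M2, hgt H = hgt G /\
  exists G0 : MT M1, [/\ hgt G0 = snap W (hgt G), mcomp G0 = mcomp G &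
    mcomp H = mcomp (phi G0)].
Proof.
set s := hgt G; have hs := snap_below G; have [_ zs _] := snapP W_finite hs.
have s_max : s <= Num.max s (snap W s + e *+ 2) by rewrite le_max lexx.
have [G0 [G0h G0c]] := mt_relevel (esym (tlevel_snap W1 hs zs s_max)).
have LE2 : tlevel M2 s = tlevel M2 (hgt (phi G0)).
  rewrite phih G0h (tlevel_snap W2 hs zs s_max) (tlevel_snap W2 hs) //.
    by rewrite lerDl.
  by rewrite le_max lerD2l mulr2n lerDl e_ge0 orbT.
by have [H [Hh Hc]] := mt_relevel LE2; exists H; split=> //; exists G0.
Qed.

Definition snap_map (G : MT M1) : MT M2 := proj1_sig (cid (snap_map_ex G)).

Lemma hgt_snap_map G : hgt (snap_map G) = hgt G.
Proof. exact: (proj2_sig (cid (snap_map_ex G))).1. Qed.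

Lemma snap_mapP G : exists G0 : MT M1, [/\ hgt G0 = snap W (hgt G),
  mcomp G0 = mcomp G & mcomp (snap_map G) = mcomp (phi G0)].
Proof. exact: (proj2_sig (cid (snap_map_ex G))).2. Qed.

Lemma snap_map_mono G1 G2 : covers G2 G1 ->
  mcomp (snap_map G1) `<=` mcomp (snap_map G2).
Proof.
move=> /coversE [h12 c12].
have [G10 [h10 c10 ->]] := snap_mapP G1; have [G20 [h20 c20 ->]] := snap_mapP G2.
suff /coversE[] : covers (phi G20) (phi G10) by [].
apply: (shift_covers phic phih); apply/coversE; split; last by rewrite c10 c20.
have [W10 z1s _] := snapP W_finite (snap_below G1).
have [_ _ zmax] := snapP W_finite (snap_below G2).
by rewrite h10 h20; apply: zmax => //; exact: le_trans h12.
Qed.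

Lemma freq_snap_map G : (forall G', mono_le (freq (phi G')) (freq G')) ->
  mono_le (freq (snap_map G)) (freq G).
Proof.
move=> phif; have [G0 [_ c0 f0]] := snap_mapP G.
by rewrite (freq_mcomp f0) -(freq_mcomp c0); exact: phif.
Qed.

Lemma snap_map_continuous : continuous snap_map.
Proof. exact: level_map_continuous hgt_snap_map snap_map_mono. Qed.

End SnapMap.

Section SnapMapK.
Variables (R : realType) (W : set R) (e : R).
Hypothesis W_finite : finite_set W.
Hypothesis e_ge0 : 0 <= e.
Hypothesis W_gap : forall w1 w2, W w1 -> W w2 -> w1 < w2 -> e *+ 2 < w2 - w1.
Variables (M M' : pmt R) (phi : MT M -> MT M') (psi : MT M' -> MT M).
Hypothesis WM : crit_values M `<=` W.
Hypothesis WM' : crit_values M' `<=` W.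
Hypothesis psic : continuous psi.
Hypothesis phih : forall G, hgt (phi G) = hgt G + e.
Hypothesis psih : forall G, hgt (psi G) = hgt G + e.
Hypothesis psi_phi_covers : forall G, covers (psi (phi G)) G.

Let f := snap_map W_finite e_ge0 W_gap WM WM' phih.
Let g := snap_map W_finite e_ge0 W_gap WM' WM psih.

(* Every level involved lies in [snap s, snap s + 2 e], where the sublevel sets
   of [M] agree, so the covering inclusions become equalities. *)
Lemma snap_mapK : cancel f g.
Proof.
move=> G; have [G0 [h0 c0 fc]] := snap_mapP W_finite e_ge0 W_gap WM WM' phih G.
have [H0 [hH0 cH0 gc]] := snap_mapP W_finite e_ge0 W_gap WM' WM psih (f G).
rewrite hgt_snap_map in hH0; set z := snap W (hgt G) in h0 hH0.
have hs := snap_below WM G.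
have [_ zs _] := snapP W_finite hs.
have Lz r : z <= r <= z + e *+ 2 -> tlevel M r = tlevel M z.
  move=> /andP[zr rz]; apply: (tlevel_snap W_finite W_gap WM hs zr).
  by rewrite le_max rz orbT.
have cov : covers (phi G0) H0.
  by apply/coversE; rewrite phih hH0 h0 lerDl cH0 fc; split.
have /coversE [_ sub1] := shift_covers psic psih cov.
have /coversE [_ sub2] := psi_phi_covers G0.
have E1 : mcomp (psi H0) = mcomp (psi (phi G0)).
  apply: mcomp_eq sub1; rewrite !psih phih hH0 h0 (Lz (z + e)) ?(Lz (z + e + e)) //.
    by rewrite -addrA lerDl addr_ge0 //= -addrA lerD2l mulr2n.
  by rewrite lerDl e_ge0 lerD2l mulr2n lerDl.
have E2 : mcomp G0 = mcomp (psi (phi G0)).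
  apply: mcomp_eq sub2; rewrite psih phih h0 (Lz (z + e + e)) //.
  by rewrite -addrA lerDl addr_ge0 //= -addrA lerD2l mulr2n.
apply: mt_ext; first by rewrite !hgt_snap_map.
by rewrite gc E1 -E2 c0.
Qed.

End SnapMapK.

Lemma ereal_inf_add_le (R : realType) (S1 S2 S3 : set R) :
  (forall x, S1 x -> 0 <= x) -> (forall y, S2 y -> 0 <= y) ->
  (forall x y, S1 x -> S2 y -> S3 (x + y)) ->
  (ereal_inf [set x%:E | x in S3] <=
   ereal_inf [set x%:E | x in S1] + ereal_inf [set x%:E | x in S2])%E.
Proof.
move=> S1ge0 S2ge0 S123.
have inf_ge0 (S : set R) : (forall x, S x -> 0 <= x) ->
    (0 <= ereal_inf [set x%:E | x in S])%E.
  by move=> Sge0; apply: le_ereal_inf_tmp => _ [x Sx <-]; rewrite lee_fin Sge0.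
have inf_fin (S : set R) x0 : (forall x, S x -> 0 <= x) -> S x0 ->
    ereal_inf [set x%:E | x in S] \is a fin_num.
  move=> Sge0 Sx0; rewrite ge0_fin_numE ?inf_ge0 //; apply: le_lt_trans (ltry x0).
  by apply: ge_ereal_inf; exists x0%:E => //; exists x0.
have [[x0 S1x0]|N1] := pselect (S1 !=set0); last first.
  rewrite (_ : S1 = set0); last by apply/seteqP; split=> // z Sz; apply: N1; exists z.
  rewrite image_set0 ereal_inf0 addye ?leey // gt_eqF //.
  exact: lt_le_trans (inf_ge0 _ S2ge0).
have [[y0 S2y0]|N2] := pselect (S2 !=set0); last first.
  rewrite (_ : S2 = set0); last by apply/seteqP; split=> // z Sz; apply: N2; exists z.
  rewrite image_set0 ereal_inf0 addey ?leey // gt_eqF //.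
  exact: lt_le_trans (inf_ge0 _ S1ge0).
have fin1 := inf_fin _ _ S1ge0 S1x0; have fin2 := inf_fin _ _ S2ge0 S2y0.
apply/lee_addgt0Pr => eps eps0; have eps2 : 0 < eps / 2 by rewrite divr_gt0.
have [_ [x Sx <-] xlt] := lb_ereal_inf_adherent eps2 fin1.
have [_ [y Sy <-] ylt] := lb_ereal_inf_adherent eps2 fin2.
apply: le_trans (_ : ((x + y)%:E <= _)%E).
  by apply: ge_ereal_inf; exists (x + y)%:E => //; exists (x + y) => //; exact: S123.
move: xlt ylt; rewrite -(fineK fin1) -(fineK fin2) -!EFinD !lte_fin lee_fin.
by move=> h1 h2; lra.
Qed.

Section MonomialOrder.
Variable R : realType.
Implicit Types a b c : nat * R.

Lemma mono_le_refl a : mono_le a a.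
Proof. by right. Qed.

Lemma mono_le_trans a b c : mono_le a b -> mono_le b c -> mono_le a c.
Proof.
move=> [ab|[ab1 ab2]] [bc|[bc1 bc2]].
- by left; exact: ltn_trans bc.
- by left; rewrite -bc1.
- by left; rewrite ab1.
- by right; split; [rewrite ab1|exact: le_trans bc2].
Qed.

Lemma mono_le_anti a b : mono_le a b -> mono_le b a -> a = b.
Proof.
case: a b => [a1 a2] [b1 b2] [ab|[/= ab1 ab2]] [ba|[/= ba1 ba2]] //=.
- by move: (ltn_trans ab ba); rewrite ltnn.
- by move: ab; rewrite ba1 ltnn.
- by move: ba; rewrite ab1 ltnn.
- by rewrite ab1; congr pair; apply/eqP; rewrite eq_le ab2 ba2.
Qed.

End MonomialOrder.

Section Interleaving.
Variable R : realType.

Lemma covers_trans (M : pmt R) (G1 G2 G3 : MT M) :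
  covers G1 G2 -> covers G2 G3 -> covers G1 G3.
Proof.
move=> /coversE[h12 c12] /coversE[h23 c23].
by apply/coversE; split; [exact: le_trans h12|exact: subset_trans c12].
Qed.

Lemma compatible_sym (M M' : pmt R) e (phi : MT M -> MT M') (psi : MT M' -> MT M) :
  compatible e phi psi -> compatible e psi phi.
Proof. by case=> c1 c2 [h1 h2] [v1 v2] [f1 f2]; split. Qed.

Lemma compatible_comp (M M' M'' : pmt R) e1 e2
    (phi1 : MT M -> MT M') (psi1 : MT M' -> MT M)
    (phi2 : MT M' -> MT M'') (psi2 : MT M'' -> MT M') :
  compatible e1 phi1 psi1 -> compatible e2 phi2 psi2 ->
  compatible (e1 + e2) (phi2 \o phi1) (psi1 \o psi2).
Proof.
case=> c1 d1 [h1 k1] [v1 w1] [f1 g1]; case=> c2 d2 [h2 k2] [v2 w2] [f2 g2].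
split.
- by move=> x; apply: continuous_comp; [exact: c1|exact: c2].
- by move=> x; apply: continuous_comp; [exact: d2|exact: d1].
- by split=> G /=; [rewrite h2 h1 addrA|rewrite k1 k2 addrA addrAC].
- split=> G /=.
  + by apply: covers_trans (v1 G); apply: (shift_covers d1 k1); exact: v2.
  + by apply: covers_trans (w2 G); apply: (shift_covers c2 h2); exact: w1.
- split=> G /=; first exact: mono_le_trans (f2 _) (f1 _).
  exact: mono_le_trans (g1 _) (g2 _).
Qed.

Lemma equal_compatible (M M' : pmt R) :
  pmt_equal M M' ->
  exists (phi : MT M -> MT M') (psi : MT M' -> MT M), compatible 0 phi psi.
Proof.
move=> [f [g [[fg gf] fc gc fh ff]]]; exists f, g; split=> //.
- by split=> G; rewrite addr0 ?fh // -{2}(gf G) fh.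
- by split=> G; rewrite ?fg ?gf; apply/coversE; split.
- split=> G; first by rewrite ff; exact: mono_le_refl.
  by rewrite -{2}(gf G) ff; exact: mono_le_refl.
Qed.

Lemma small_compatible_equal (W : set R) e (M M' : pmt R)
    (phi : MT M -> MT M') (psi : MT M' -> MT M) :
  finite_set W -> 0 <= e ->
  (forall w1 w2, W w1 -> W w2 -> w1 < w2 -> e *+ 2 < w2 - w1) ->
  crit_values M `<=` W -> crit_values M' `<=` W ->
  compatible e phi psi -> pmt_equal M M'.
Proof.
move=> Wfin e0 gap WM WM' [phic psic [phih psih] [cov1 cov2] [phif psif]].
pose f := snap_map Wfin e0 gap WM WM' phih.
pose g := snap_map Wfin e0 gap WM' WM psih.
have fK : cancel f g by exact: snap_mapK.
have gK : cancel g f by exact: (snap_mapK Wfin e0 gap WM' WM phic psih phih cov2).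
exists f, g; split=> //.
- exact: snap_map_continuous.
- exact: snap_map_continuous.
- exact: hgt_snap_map.
- move=> G; apply: mono_le_anti; first exact: freq_snap_map.
  by rewrite -{1}(fK G); exact: freq_snap_map.
Qed.

Lemma d_IE (M M' : pmt R) : d_I M M' =
  ereal_inf [set e%:E | e in [set e | 0 <= e /\
    exists (phi : MT M -> MT M') (psi : MT M' -> MT M), compatible e phi psi]].
Proof. by []. Qed.

Lemma d_I_ge0 (M M' : pmt R) : (0 <= d_I M M')%E.
Proof. by apply: le_ereal_inf_tmp => _ [x [x0 _] <-]; rewrite lee_fin. Qed.

Lemma d_IC (M M' : pmt R) : d_I M M' = d_I M' M.
Proof.
rewrite !d_IE; congr ereal_inf; congr image; apply/seteqP.
by split=> e [e0 [phi [psi c]]]; split=> //; exists psi, phi; exact: compatible_sym.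
Qed.

Lemma d_I_triangle (M M' M'' : pmt R) : (d_I M M'' <= d_I M M' + d_I M' M'')%E.
Proof.
rewrite !d_IE; apply: ereal_inf_add_le; [by move=> x []|by move=> x []|].
move=> x y [x0 [phi1 [psi1 c1]]] [y0 [phi2 [psi2 c2]]]; split; first exact: addr_ge0.
by exists (phi2 \o phi1), (psi1 \o psi2); exact: compatible_comp.
Qed.

Lemma d_I_equal (M M' : pmt R) : pmt_equal M M' -> d_I M M' = 0%E.
Proof.
move=> /equal_compatible [phi [psi c]]; apply/eqP; rewrite eq_le d_I_ge0 andbT.
by apply: ge_ereal_inf; exists 0%:E => //; exists 0 => //; split=> //; exists phi, psi.
Qed.

Lemma d_I_eq0_equal (M M' : pmt R) : d_I M M' = 0%E -> pmt_equal M M'.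
Proof.
move=> dI0; set W := crit_values M `|` crit_values M'.
have Wfin : finite_set W by rewrite finite_setU; split; exact: crit_values_finite.
have [gam gam0 gamP] := finite_set_gap Wfin.
have : (d_I M M' < (gam / 3)%:E)%E by rewrite dI0 lte_fin divr_gt0.
rewrite d_IE => /ereal_inf_lt [_ [e [e0 [phi [psi c]]] <-]]; rewrite lte_fin => egam.
have WM : crit_values M `<=` W by move=> w; left.
have WM' : crit_values M' `<=` W by move=> w; right.
apply: (small_compatible_equal Wfin e0 _ WM WM' c).
by move=> w1 w2 W1 W2 /(gamP _ _ W1 W2); rewrite mulr2n; lra.
Qed.

End Interleaving.

Local Open Scope ereal_scope.

Theorem mainTheorem10 (R : realType) (M M' M'' : pmt R) :
  [/\ 0 <= d_I M M' /\ (0 < d_I M M' <-> ~ pmt_equal M M'),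
      d_I M M' = d_I M' M &
      d_I M M'' <= d_I M M' + d_I M' M''].
Proof.
split; [split|exact: d_IC|exact: d_I_triangle].
- exact: d_I_ge0.
- split=> [dpos /d_I_equal d0|neq]; first by move: dpos; rewrite d0 ltxx.
  by rewrite lt_def d_I_ge0 andbT; apply/eqP => /d_I_eq0_equal.
Qed.
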